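(* Let $\alpha,\beta,\gamma,\delta$ be non-negative integers with $\alpha<\gamma$ and $\delta<\beta$, and let $a,a',b,b',c,c',d,d'$ be non-negative integers with $a,a'\le\alpha$, $b,b'\le\beta$, $c,c'\le\gamma$, $d,d'\le\delta$. Consider the mixed polynomial $$ g(z_1,z_2,\bar z_1,\bar z_2)= z_1^{a}\bar z_1^{\alpha-a}z_2^{b}\bar z_2^{\beta-b}- z_1^{a'}\bar z_1^{\alpha-a'}z_2^{b'}\bar z_2^{\beta-b'}+ z_1^{c}\bar z_1^{\gamma-c}z_2^{d}\bar z_2^{\delta-d}+ z_1^{c'}\bar z_1^{\gamma-c'}z_2^{d'}\bar z_2^{\delta-d'} . $$ Let $P={}^t(p_1,p_2)$ be a strictly positive integer weight vector and $Q={}^t(q_1,q_2)\neq \mathbf 0$ a weight vector with $q_1,q_2\ge 0$. Assume: (1) $p_1(\gamma-\alpha)+p_2(\delta-\beta)=0$; (2) $a-a'=q_2k$ and $b-b'=-q_1k$ for some non-zero integer $k$; (3) $(a-a',\,b-b')=(c-c',\,d-d')$; (4) $(2(a-c)-\alpha+\gamma,\ 2(b-d)-\beta+\delta)=\pm(a-a',\,b-b')$; (5) $q_1(2a-\alpha)+q_2(2b-\beta)\neq 0$. Then $g$ is a mixed weighted homogeneous polynomial, radially weighted homogeneous with respect to $P$ of radial degree $d_r=p_1\alpha+p_2\beta=p_1\gamma+p_2\delta>0$ and polar weighted homogeneous with respect to $Q$ of polar degree $d_p=q_1(2a-\alpha)+q_2(2b-\beta)\neq 0$. Moreover, for the Newton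 polyhedron $\Gamma_+(g)$ of the germ $(g,\mathbf 0)$ one has $\dim\Delta(P)=1$ and $g=g_{\Delta(P)}$, and $$ g^{-1}(0)\cap(\mathbb C^* )^2=\emptyset .$$ Consequently $(g,\mathbf 0)$ is Newton non-degenerate over $\Delta(P)$ but not strongly Newton non-degenerate over $\Delta(P)$.
   Context: A mixed polynomial is a finite sum $f(\mathbf z,\bar{\mathbf z})=\sum_{\nu,\mu}c_{\nu,\mu}\mathbf z^\nu\bar{\mathbf z}^\mu$ with $\nu,\mu\in\mathbb Z_+^n$, $\mathbf z^\nu=z_1^{\nu_1}\cdots z_n^{\nu_n}$, $\bar{\mathbf z}^\mu=\bar z_1^{\mu_1}\cdots\bar z_n^{\mu_n}$ (coefficients are unique); assume $f(\mathbf 0)=0$. A point $\mathbf a$ is a mixed critical point of $f$ if the real differential $df_{\mathbf a}:T_{\mathbf a}\mathbb C^n\to T_{f(\mathbf a)}\mathbb C\cong\mathbb R^2$ has rank $<2$. $f$ is radially weighted homogeneous with respect to $P={}^t(p_1,\dots,p_n)\in\mathbb Z_+^n\setminus\{0\}$ of radial degree $d_r>0$ if $c_{\nu,\mu}\ne0\Rightarrow\sum_i p_i(\nu_i+\mu_i)=d_r$; $f$ is polar weighted homogeneous with respect to $Q={}^t(q_1,\dots,q_n)\ne0$ of polar degree $d_p$ if $c_{\nu,\mu}\ne0\Rightarrow\sum_i q_i(\nu_i-\mu_i)=d_p$. A mixed weighted homogeneous polynomial is one that is both radially and polar weighted homogeneous (possibly with different weight vectors). The (radial) Newton polyhedron $\Gamma_+(f)$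 is the convex hull of $\bigcup_{c_{\nu,\mu}\neq0}\big((\nu+\mu)+\mathbb R_+^n\big)$. For $P\in\mathbb Z_+^n\setminus\{0\}$, $d(P)=\min_{\xi\in\Gamma_+(f)}\sum_j p_j\xi_j$ and the face $\Delta(P)=\{\xi\in\Gamma_+(f):\sum_jp_j\xi_j=d(P)\}$; $P$ is strictly positive if all $p_i>0$. For a compact face $\Delta$, the face function is $f_\Delta=\sum_{\nu+\mu\in\Delta}c_{\nu,\mu}\mathbf z^\nu\bar{\mathbf z}^\mu$. $(f,\mathbf 0)$ is Newton non-degenerate over a compact face $\Delta$ if $0$ is not a mixed critical value of $f_\Delta:(\mathbb C^* )^n\to\mathbb C$ (in particular this holds if $f_\Delta^{-1}(0)\cap(\mathbb C^* )^n=\emptyset$). For a compact face $\Delta$ with $\dim\Delta\ge1$, $(f,\mathbf 0)$ is strongly Newton non-degenerate over $\Delta$ if $f_\Delta:(\mathbb C^* )^n\to\mathbb C$ has no mixed critical points and is surjective onto $\mathbb C$. *)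

From HB Require Import structures.
From mathcomp Require Import all_boot all_order all_algebra.
From mathcomp Require Import all_classical all_reals all_analysis.
From mathcomp Require Import complex.
Set Implicit Arguments.
Unset Strict Implicit.
Unset Printing Implicit Defensive.
Import Order.TTheory GRing.Theory Num.Theory.
Import numFieldNormedType.Exports.
Local Open Scope ring_scope.
Local Open Scope classical_set_scope.

Definition expo (n : nat) := {ffun 'I_n -> nat}.

(* A mixed polynomial in n variables: a finite formal sum of terms
   c * z^nu * zbar^mu, given as a list of (c, (nu, mu)).  The (unique)
   coefficient c_{nu,mu} is obtained by collecting like terms. *)
Definition mixed_poly (R : realType) (n : nat) := seq (R[i] * (expo n * expo n)).

Definition mcoef (R : realType) n (f : mixed_poly R n) (nu mu : expo n) : R[i] :=
  \sum_(t <- f | t.2 == (nu, mu)) t.1.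

Definition meval (R : realType) n (f : mixed_poly R n) (z : 'I_n -> R[i]) : R[i] :=
  \sum_(t <- f) t.1 * \prod_(i < n) (z i ^+ t.2.1 i * conjc (z i) ^+ t.2.2 i).

Definition in_torus (R : realType) n (z : 'I_n -> R[i]) := forall i, z i != 0.

(* f viewed as a real map R^{2n} -> R^2, (x, y) |-> (Re f(x+iy), Im f(x+iy)) *)
Definition cplx_of_real (R : realType) n (x : 'rV[R]_(n + n)) : 'I_n -> R[i] :=
  fun i => Complex (x ord0 (lshift n i)) (x ord0 (rshift n i)).
Definition real_of_cplx (R : realType) n (z : 'I_n -> R[i]) : 'rV[R]_(n + n) :=
  \row_(j < n + n) match fintype.split j with inl i => complex.Re (z i) | inr i => complex.Im (z i) end.
Definition real_map (R : realType) n (f : mixed_poly R n) : 'rV[R]_(n + n) -> 'rV[R]_2 :=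
  fun x => let w := meval f (cplx_of_real x) in
           \row_(j < 2) (if val j == 0%N then complex.Re w else complex.Im w).

Definition mixed_critical (R : realType) n (f : mixed_poly R n) (a : 'I_n -> R[i]) :=
  (\rank (jacobian (real_map f) (real_of_cplx a)) < 2)%N.

Definition radially_wh (R : realType) n (f : mixed_poly R n) (P : 'I_n -> nat) (dr : nat) :=
  [/\ exists i, P i != 0%N, (0 < dr)%N &
      forall nu mu, mcoef f nu mu != 0 -> (\sum_(i < n) P i * (nu i + mu i))%N = dr].

Definition polar_wh (R : realType) n (f : mixed_poly R n) (Q : 'I_n -> int) (dp : int) :=
  (exists i, Q i != 0) /\
  forall nu mu, mcoef f nu mu != 0 ->
    \sum_(i < n) Q i * ((nu i)%:Z - (mu i)%:Z) = dp.

Definition mixed_wh (R : realType) n (f : mixed_poly R n) :=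
  exists P dr Q dp, radially_wh f P dr /\ polar_wh f Q dp.

Definition expo_pt (R : realType) n (nu mu : expo n) : 'rV[R]_n :=
  \row_(i < n) ((nu i + mu i)%:R).

Definition convex_hull (R : realType) n (S : set 'rV[R]_n) : set 'rV[R]_n :=
  [set x | exists (m : nat) (w : 'I_m -> R) (v : 'I_m -> 'rV[R]_n),
     [/\ forall j, 0 <= w j, \sum_(j < m) w j = 1, forall j, S (v j) &
         x = \sum_(j < m) w j *: v j]].

Definition newton_polyhedron (R : realType) n (f : mixed_poly R n) : set 'rV[R]_n :=
  convex_hull [set x | exists nu mu, mcoef f nu mu != 0 /\
                         exists r : 'rV[R]_n, (forall i, 0 <= r ord0 i) /\
                                              x = expo_pt R nu mu + r].

Definition wdot (R : realType) n (P : 'I_n -> nat) (x : 'rV[R]_n) : R :=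
  \sum_(i < n) (P i)%:R * x ord0 i.

Definition newton_face (R : realType) n (f : mixed_poly R n) (P : 'I_n -> nat) : set 'rV[R]_n :=
  [set x | newton_polyhedron f x /\
           forall y, newton_polyhedron f y -> wdot P x <= wdot P y].

(* S contains m+1 affinely independent points *)
Definition has_aff_indep (R : realType) n (S : set 'rV[R]_n) (m : nat) :=
  exists (x0 : 'rV[R]_n) (X : 'M[R]_(m, n)),
    [/\ S x0, forall i, S (x0 + row i X) & \rank X = m].

Definition aff_dim (R : realType) n (S : set 'rV[R]_n) (m : nat) :=
  has_aff_indep S m /\ ~ has_aff_indep S m.+1.

Definition face_fun (R : realType) n (f : mixed_poly R n) (D : set 'rV[R]_n) : mixed_poly R n :=
  [seq t <- f | `[< D (expo_pt R t.2.1 t.2.2) >] ].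

Definition newton_nondeg_over (R : realType) n (f : mixed_poly R n) (D : set 'rV[R]_n) :=
  ~ exists z, [/\ in_torus z, mixed_critical (face_fun f D) z & meval (face_fun f D) z = 0].

Definition strongly_newton_nondeg_over (R : realType) n (f : mixed_poly R n) (D : set 'rV[R]_n) :=
  (forall z, in_torus z -> ~ mixed_critical (face_fun f D) z) /\
  (forall w : R[i], exists z, in_torus z /\ meval (face_fun f D) z = w).

Definition ex2 (x y : nat) : expo 2 := [ffun i : 'I_2 => if val i == 0%N then x else y].
Definition w2 (T : Type) (x y : T) : 'I_2 -> T := fun i => if val i == 0%N then x else y.

Definition gpoly (R : realType) (al be ga de a a' b b' c c' d d' : nat) : mixed_poly R 2 :=
  [:: (1, (ex2 a b, ex2 (al - a) (be - b)));
      (-1, (ex2 a' b', ex2 (al - a') (be - b')));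
      (1, (ex2 c d, ex2 (ga - c) (de - d)));
      (1, (ex2 c' d', ex2 (ga - c') (de - d')))].

From HB Require Import structures.
From mathcomp Require Import all_boot all_order all_algebra.
From mathcomp Require Import all_classical all_reals all_analysis.
From mathcomp Require Import complex.
From mathcomp Require Import ring lra zify.
Import Order.TTheory GRing.Theory Num.Theory.
Local Open Scope ring_scope.

(* Put W = z1^(a-a') z2^(b-b').  On (C^* )^2, conditions (3) and (4) make the
   four monomials of g equal to T, T W^*/W, T r W^*^e and T r W^*^e W^*/W for
   some T <> 0, some positive real r and e = +1 or -1.  Clearing denominators,
   g(z) = 0 would force W - W^* + r W^* (W + W^* ) = 0 (e = 1) or
   W^* (W - W^* ) + r (W + W^* ) = 0 (e = -1), and comparing real and imaginary
   parts gives W = 0.  By (1) all exponents lie on one P-level line, so Delta(P)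
   is the segment from (alpha, beta) to (gamma, delta) and contains every
   monomial of g; as g has no zero on the torus, 0 is not a value of g_Delta(P),
   which gives non-degeneracy and rules out surjectivity. *)

Section ConjugateSums.
Variable R : realType.
Local Open Scope complex_scope.

Lemma pos_complexP (r : R[i]) : 0 < r -> exists2 s : R, 0 < s & r = s%:C.
Proof. by case: r => x y; rewrite ltcE /= => /andP[/eqP -> x_gt0]; exists x. Qed.

Lemma pmul_sqr_eq0 (s t : R) : 0 < s -> s * (t * t) = 0 -> t = 0.
Proof. by move=> s_gt0 /eqP; rewrite mulf_eq0 gt_eqF //= mulf_eq0 orbb => /eqP. Qed.

Lemma subJ_add_pmulJ_neq0 (W r : R[i]) : W != 0 -> 0 < r ->
  W - conjc W + r * conjc W * (W + conjc W) != 0.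
Proof.
move=> + /pos_complexP[s s_gt0 ->]; case: W => x y W_neq0.
apply: contra W_neq0; rewrite !eq_complex /= => /andP[/eqP eRe /eqP eIm].
have x0 : x = 0 by apply: (@pmul_sqr_eq0 s) => //; lra.
have y0 : y = 0 by rewrite x0 in eIm; lra.
by rewrite x0 y0 !eqxx.
Qed.

Lemma mulJ_subJ_add_pmul_neq0 (W r : R[i]) : W != 0 -> 0 < r ->
  conjc W * (W - conjc W) + r * (W + conjc W) != 0.
Proof.
move=> + /pos_complexP[s s_gt0 ->]; case: W => x y W_neq0.
apply: contra W_neq0; rewrite !eq_complex /= => /andP[/eqP eRe /eqP eIm].
have /eqP : x * y = 0 by lra.
rewrite mulf_eq0 => /orP[/eqP x0 | /eqP y0].
- have y0 : y = 0 by apply: (@pmul_sqr_eq0 1) => //; rewrite x0 in eRe; lra.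
  by rewrite x0 y0 !eqxx.
- have x0 : x = 0 by apply: (@pmul_sqr_eq0 s) => //; rewrite y0 in eRe; nra.
  by rewrite x0 y0 !eqxx.
Qed.

End ConjugateSums.

Section LaurentMonomials.
Context {R : realType}.
Variables z1 z2 : R[i].
Hypotheses (z1_neq0 : z1 != 0) (z2_neq0 : z2 != 0).

Definition lmono (n1 m1 n2 m2 : int) : R[i] :=
  z1 ^ n1 * conjc z1 ^ m1 * (z2 ^ n2 * conjc z2 ^ m2).

Let z1J_neq0 : conjc z1 != 0. Proof. by rewrite conjc_eq0. Qed.
Let z2J_neq0 : conjc z2 != 0. Proof. by rewrite conjc_eq0. Qed.

Lemma lmonoD n1 m1 n2 m2 n1' m1' n2' m2' :
  lmono (n1 + n1') (m1 + m1') (n2 + n2') (m2 + m2') =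
  lmono n1 m1 n2 m2 * lmono n1' m1' n2' m2'.
Proof. by rewrite /lmono !expfzDr //; ring. Qed.

Lemma lmono_neq0 n1 m1 n2 m2 : lmono n1 m1 n2 m2 != 0.
Proof. by rewrite /lmono !mulf_neq0 // expfz_neq0. Qed.

Lemma lmono_diag_gt0 u v : 0 < lmono u u v v.
Proof.
have normsq_gt0 (z : R[i]) : z != 0 -> 0 < z * conjc z.
  by move=> z_neq0; rewrite lt_def mulcJ_ge0 andbT mulf_neq0 // conjc_eq0.
by rewrite /lmono -!expfzMl mulr_gt0 // exprz_gt0 // normsq_gt0.
Qed.

Lemma lmono_conj x y : conjc (lmono x 0 y 0) = lmono 0 x 0 y.
Proof. by rewrite /lmono !expr0z !mulr1 !mul1r rmorphM /= !fmorphXz. Qed.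

Lemma lmono_conj_div x y : lmono (- x) x (- y) y = conjc (lmono x 0 y 0) / lmono x 0 y 0.
Proof.
rewrite lmono_conj /lmono -!invr_expz !expr0z.
by field; rewrite !expfz_neq0.
Qed.

Lemma lmono_conj_inv x y : lmono 0 (- x) 0 (- y) = (conjc (lmono x 0 y 0))^-1.
Proof.
rewrite lmono_conj /lmono -!invr_expz !expr0z.
by field; rewrite !expfz_neq0.
Qed.

End LaurentMonomials.

Section MixedPolynomials.
Context {R : realType} {n : nat}.
Implicit Types (f : mixed_poly R n) (P : 'I_n -> nat) (x y : 'rV[R]_n).

Lemma mcoef_neq0_key f nu mu : mcoef f nu mu != 0 -> (nu, mu) \in [seq t.2 | t <- f].
Proof.
apply: contraNT => key_notin; apply/eqP; rewrite /mcoef big1_seq // => t /andP[/eqP key t_in].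
by move: key_notin; rewrite -key map_f.
Qed.

Lemma mcoef_uniq_key f t :
  uniq [seq s.2 | s <- f] -> t \in f -> mcoef f t.2.1 t.2.2 = t.1.
Proof.
elim: f => // s f IH /= /andP[s_notin f_uniq]; rewrite inE /mcoef big_cons -surjective_pairing.
case/orP=> [/eqP -> | t_in]; last first.
  have -> : (s.2 == t.2) = false by apply: contraNF s_notin => /eqP ->; apply: map_f.
  exact: IH.
rewrite eqxx big1_seq ?addr0 // => u /andP[/eqP key u_in].
by move: s_notin; rewrite -key map_f.
Qed.

Lemma face_fun_id f (D : set 'rV[R]_n) :
  (forall t, t \in f -> D (expo_pt R t.2.1 t.2.2)) -> face_fun f D = f.
Proof. by move=> inD; apply/all_filterP/allP => t /inD /asboolP. Qed.

Lemma torus_neq0_newton_nondeg f (D : set 'rV[R]_n) :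
  (forall z, in_torus z -> meval (face_fun f D) z != 0) -> newton_nondeg_over f D.
Proof. by move=> neq0 [z [/neq0 + _ meval0]]; rewrite meval0 eqxx. Qed.

Lemma torus_neq0_not_strongly_newton_nondeg f (D : set 'rV[R]_n) :
  (forall z, in_torus z -> meval (face_fun f D) z != 0) ->
  ~ strongly_newton_nondeg_over f D.
Proof. by move=> neq0 [_ /(_ 0)[z [/neq0 + meval0]]]; rewrite meval0 eqxx. Qed.

Lemma wdot_expo_pt P nu mu :
  wdot P (expo_pt R nu mu) = (\sum_(i < n) P i * (nu i + mu i))%N%:R.
Proof. by rewrite /wdot natr_sum; apply: eq_bigr => i _; rewrite mxE natrM. Qed.

Lemma wdotD P x y : wdot P (x + y) = wdot P x + wdot P y.
Proof. by rewrite /wdot -big_split; apply: eq_bigr => i _; rewrite mxE mulrDr. Qed.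

Lemma wdot_lincomb P m (w : 'I_m -> R) (v : 'I_m -> 'rV[R]_n) :
  wdot P (\sum_(j < m) w j *: v j) = \sum_(j < m) w j * wdot P (v j).
Proof.
rewrite /wdot; under eq_bigr => i _ do rewrite summxE big_distrr /=.
rewrite exchange_big /=; apply: eq_bigr => j _; rewrite big_distrr /=.
by apply: eq_bigr => i _; rewrite mxE mulrCA.
Qed.

Lemma wdot_ge0 P x : (forall i, 0 <= x ord0 i) -> 0 <= wdot P x.
Proof. by move=> x_ge0; apply: sumr_ge0 => i _; rewrite mulr_ge0. Qed.

Lemma expo_pt_newton_polyhedron {f nu mu} :
  mcoef f nu mu != 0 -> newton_polyhedron f (expo_pt R nu mu).
Proof.
move=> coef_neq0; exists 1%N, (fun=> 1), (fun=> expo_pt R nu mu); split.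
- by move=> j; rewrite ler01.
- by rewrite big_ord1.
- by move=> j; exists nu, mu; split => //; exists 0; split=> [i|]; rewrite ?mxE ?addr0.
- by rewrite big_ord1 scale1r.
Qed.

Section HomogeneousFace.
Context {f : mixed_poly R n} {P : 'I_n -> nat} {dr : nat}.
Hypothesis f_radial : forall nu mu, mcoef f nu mu != 0 ->
  (\sum_(i < n) P i * (nu i + mu i))%N = dr.

Lemma newton_polyhedron_wdot_ge x : newton_polyhedron f x -> dr%:R <= wdot P x.
Proof.
move=> [m [w [v [w_ge0 w_sum1 v_in ->]]]].
rewrite wdot_lincomb.
have -> : dr%:R = \sum_(j < m) w j * dr%:R :> R by rewrite -mulr_suml w_sum1 mul1r.
apply: ler_sum => j _; apply: ler_wpM2l => //.
have [nu [mu [coef_neq0 [r [r_ge0 ->]]]]] := v_in j.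
by rewrite wdotD wdot_expo_pt f_radial // lerDl wdot_ge0.
Qed.

Lemma newton_faceP {nu0 mu0} : mcoef f nu0 mu0 != 0 ->
  forall x, newton_face f P x <-> newton_polyhedron f x /\ wdot P x = dr%:R.
Proof.
move=> coef_neq0 x; split=> [[x_in x_min] | [x_in x_dr]].
- split=> //; apply/eqP; rewrite eq_le newton_polyhedron_wdot_ge // andbT.
  have := x_min _ (expo_pt_newton_polyhedron coef_neq0).
  by rewrite wdot_expo_pt f_radial.
- by split=> // y; rewrite x_dr; apply: newton_polyhedron_wdot_ge.
Qed.

Lemma expo_pt_newton_face {nu mu} :
  mcoef f nu mu != 0 -> newton_face f P (expo_pt R nu mu).
Proof.
move=> coef_neq0; apply/(newton_faceP coef_neq0); split.
  exact: expo_pt_newton_polyhedron.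
by rewrite wdot_expo_pt f_radial.
Qed.

End HomogeneousFace.

Lemma has_aff_indep1 {S : set 'rV[R]_n} {x y} : S x -> S y -> x != y -> has_aff_indep S 1.
Proof.
move=> Sx Sy neq_xy; exists x, (y - x); split=> //.
  move=> i; have -> : row i (y - x) = y - x by apply/rowP => j; rewrite mxE (ord1 i).
  by rewrite addrC subrK.
by rewrite rank_rV subr_eq0 eq_sym neq_xy.
Qed.

Lemma hyperplane_not_aff_indep (S : set 'rV[R]_n) P (d : R) :
  (exists i, P i != 0%N) -> (forall x, S x -> wdot P x = d) -> ~ has_aff_indep S n.
Proof.
move=> [i0 Pi0_neq0] S_wdot [x0 [X [Sx0 SX rankX]]].
pose normal : 'cV[R]_n := \col_j (P j)%:R.
have row_wdot0 i : wdot P (row i X) = 0.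
  by apply: (addrI d); rewrite -{1}(S_wdot x0) // -wdotD S_wdot // addr0.
have X_normal : X *m normal = 0.
  apply/colP => i; rewrite !mxE -[RHS](row_wdot0 i) /wdot.
  by apply: eq_bigr => j _; rewrite !mxE mulrC.
have X_unit : X \in unitmx by rewrite -row_free_unit /row_free rankX.
have /colP/(_ i0) : normal = 0 by rewrite -(mulKmx X_unit normal) X_normal mulmx0.
by rewrite !mxE => /eqP; rewrite pnatr_eq0 (negbTE Pi0_neq0).
Qed.

End MixedPolynomials.

Lemma ex2_pair_inj x y u v x' y' u' v' :
  (ex2 x y, ex2 u v) = (ex2 x' y', ex2 u' v') -> [/\ x = x', y = y', u = u' & v = v'].
Proof.
have ex2_inj s t s' t' : ex2 s t = ex2 s' t' -> s = s' /\ t = t'.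
  move=> e; have := congr1 (fun e : expo 2 => e ord0) e.
  by have := congr1 (fun e : expo 2 => e (lift ord0 ord0)) e; rewrite !ffunE /= => -> ->.
by case=> /ex2_inj[-> ->] /ex2_inj[-> ->].
Qed.

Lemma ex2_add_sub x y X Y i : (x <= X)%N -> (y <= Y)%N ->
  (ex2 x y i + ex2 (X - x) (Y - y) i = ex2 X Y i)%N.
Proof. by move=> le_xX le_yY; rewrite !ffunE; case: ifP => _; rewrite subnKC. Qed.

Lemma expo_pt_ex2 (R : realType) x y X Y : (x <= X)%N -> (y <= Y)%N ->
  expo_pt R (ex2 x y) (ex2 (X - x) (Y - y)) = expo_pt R (ex2 X Y) (ex2 0 0).
Proof.
move=> le_xX le_yY; apply/rowP => i; rewrite !mxE ex2_add_sub //.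
by rewrite [ex2 0 0 i]ffunE if_same addn0.
Qed.

Lemma ex2_radial_deg (p1 p2 x y X Y : nat) : (x <= X)%N -> (y <= Y)%N ->
  (\sum_(i < 2) w2 p1 p2 i * (ex2 x y i + ex2 (X - x) (Y - y) i) = p1 * X + p2 * Y)%N.
Proof.
by move=> le_xX le_yY; rewrite !big_ord_recl big_ord0 !ex2_add_sub // !ffunE addn0.
Qed.

Lemma ex2_polar_deg (q1 q2 : int) (x y X Y : nat) : (x <= X)%N -> (y <= Y)%N ->
  \sum_(i < 2) w2 q1 q2 i * ((ex2 x y i)%:Z - (ex2 (X - x) (Y - y) i)%:Z) =
  q1 * (2 * x%:Z - X%:Z) + q2 * (2 * y%:Z - Y%:Z).
Proof.
move=> le_xX le_yY; rewrite !big_ord_recl big_ord0 !ffunE /= addr0.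
by rewrite -!subzn //; congr (_ * _ + _ * _); lia.
Qed.

Lemma weighted_sum_shift {q1 q2 s1 s2 : int} (e1 e2 t : int) : q1 * s1 + q2 * s2 = 0 ->
  q1 * (e1 + t * s1) + q2 * (e2 + t * s2) = q1 * e1 + q2 * e2.
Proof.
move=> orth; transitivity (q1 * e1 + q2 * e2 + t * (q1 * s1 + q2 * s2)); first ring.
by rewrite orth mulr0 addr0.
Qed.

Lemma orth_shift_neq0 {q1 q2 k : int} {a a' b b' : nat} : k != 0 -> (q1 != 0) || (q2 != 0) ->
  a%:Z - a'%:Z = q2 * k -> b%:Z - b'%:Z = - (q1 * k) -> (a != a') || (b != b').
Proof.
move=> k_neq0 + ea eb; apply: contraTT; rewrite negb_or !negbK => /andP[/eqP aa' /eqP bb'].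
move: ea eb; rewrite aa' bb' !subrr => /esym/eqP + /esym/eqP.
by rewrite oppr_eq0 !mulf_eq0 (negbTE k_neq0) !orbF => -> ->.
Qed.

Section GPoly.
Context {R : realType} {al be ga de a a' b b' c c' d d' : nat}.
Hypotheses (Ha : (a <= al)%N) (Ha' : (a' <= al)%N) (Hb : (b <= be)%N) (Hb' : (b' <= be)%N)
  (Hc : (c <= ga)%N) (Hc' : (c' <= ga)%N) (Hd : (d <= de)%N) (Hd' : (d' <= de)%N).

Local Notation g := (gpoly R al be ga de a a' b b' c c' d d').
Local Notation Da := (a%:Z - a'%:Z).
Local Notation Db := (b%:Z - b'%:Z).
Local Notation v1 := (2 * (a%:Z - c%:Z) - al%:Z + ga%:Z).
Local Notation v2 := (2 * (b%:Z - d%:Z) - be%:Z + de%:Z).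

Hypothesis H3 : (Da, Db) = (c%:Z - c'%:Z, d%:Z - d'%:Z).
Hypothesis H4 : (v1, v2) = (Da, Db) \/ (v1, v2) = (- Da, - Db).

Lemma gpoly_keys nu mu : mcoef g nu mu != 0 ->
  [\/ (nu, mu) = (ex2 a b, ex2 (al - a) (be - b)),
      (nu, mu) = (ex2 a' b', ex2 (al - a') (be - b')),
      (nu, mu) = (ex2 c d, ex2 (ga - c) (de - d)) |
      (nu, mu) = (ex2 c' d', ex2 (ga - c') (de - d'))].
Proof. by move/mcoef_neq0_key; rewrite !inE => /or4P[] /eqP ->; constructor. Qed.

Section Polar.
Variables q1 q2 : int.
Hypothesis Horth : q1 * Da + q2 * Db = 0.
Local Notation dp := (q1 * (2 * a%:Z - al%:Z) + q2 * (2 * b%:Z - be%:Z)).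

Lemma gpoly_polar_deg nu mu : mcoef g nu mu != 0 ->
  \sum_(i < 2) w2 q1 q2 i * ((nu i)%:Z - (mu i)%:Z) = dp.
Proof.
have orth_v : q1 * v1 + q2 * v2 = 0.
  by case: H4 => -[-> ->]; rewrite // !mulrN -opprD Horth oppr0.
case: H3 => Hc3 Hd3.
move/gpoly_keys => [] [-> ->]; rewrite ex2_polar_deg //.
- rewrite -(weighted_sum_shift (2 * a%:Z - al%:Z) (2 * b%:Z - be%:Z) (-2) Horth).
  by congr (_ * _ + _ * _); lia.
- rewrite -(weighted_sum_shift (2 * a%:Z - al%:Z) (2 * b%:Z - be%:Z) (-1) orth_v).
  by congr (_ * _ + _ * _); lia.
- rewrite -(weighted_sum_shift (2 * a%:Z - al%:Z) (2 * b%:Z - be%:Z) (-1) orth_v).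
  rewrite -(weighted_sum_shift (2 * a%:Z - al%:Z + -1 * v1) (2 * b%:Z - be%:Z + -1 * v2)
               (-2) Horth).
  by congr (_ * _ + _ * _); lia.
Qed.

Lemma gpoly_polar_wh : (q1 != 0) || (q2 != 0) -> polar_wh g (w2 q1 q2) dp.
Proof.
move=> Q_neq0; split; last exact: gpoly_polar_deg.
by case/orP: Q_neq0 => ?; [exists ord0 | exists (lift ord0 ord0)].
Qed.

End Polar.

Section Radial.
Variables p1 p2 : nat.
Hypothesis Hdeg : (p1 * ga + p2 * de = p1 * al + p2 * be)%N.

Lemma gpoly_radial_deg nu mu : mcoef g nu mu != 0 ->
  (\sum_(i < 2) w2 p1 p2 i * (nu i + mu i))%N = (p1 * al + p2 * be)%N.
Proof. by move/gpoly_keys => [] [-> ->]; rewrite ex2_radial_deg. Qed.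

Lemma gpoly_radially_wh : (0 < p2)%N -> (0 < be)%N ->
  radially_wh g (w2 p1 p2) (p1 * al + p2 * be).
Proof.
move=> p2_gt0 be_gt0; split; last exact: gpoly_radial_deg.
  by exists (lift ord0 ord0); rewrite /w2 /= -lt0n.
by rewrite addn_gt0 !muln_gt0 p2_gt0 be_gt0 orbT.
Qed.

Hypotheses (Hag : (al < ga)%N) (Hshift : (a != a') || (b != b')).

Lemma gpoly_keys_uniq : uniq [seq t.2 | t <- g].
Proof.
case: H3 => Hc3 Hd3; rewrite /= !inE !negb_or !andbT.
by repeat (apply/andP; split); apply/eqP => /ex2_pair_inj[? ? ? ?]; lia.
Qed.

Lemma gpoly_coef_neq0 {t} : t \in g -> mcoef g t.2.1 t.2.2 != 0.
Proof.
move=> t_in; rewrite mcoef_uniq_key ?gpoly_keys_uniq //.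
by move: t_in; rewrite !inE => /or4P[] /eqP -> /=; rewrite ?oppr_eq0 oner_eq0.
Qed.

Lemma gpoly_expo_pt_newton_face {t} : t \in g ->
  newton_face g (w2 p1 p2) (expo_pt R t.2.1 t.2.2).
Proof. by move=> t_in; apply (expo_pt_newton_face gpoly_radial_deg (gpoly_coef_neq0 t_in)). Qed.

Lemma gpoly_newton_face_fun : face_fun g (newton_face g (w2 p1 p2)) = g.
Proof. exact: face_fun_id (@gpoly_expo_pt_newton_face). Qed.

Lemma gpoly_newton_face_dim : (0 < p1)%N -> aff_dim (newton_face g (w2 p1 p2)) 1.
Proof.
move=> p1_gt0.
have k1_in : (1, (ex2 a b, ex2 (al - a) (be - b))) \in g by rewrite inE eqxx.
have k3_in : (1, (ex2 c d, ex2 (ga - c) (de - d))) \in g by rewrite !inE eqxx !orbT.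
split.
  apply (has_aff_indep1 (gpoly_expo_pt_newton_face k1_in) (gpoly_expo_pt_newton_face k3_in)).
  rewrite /= !expo_pt_ex2 //; apply/eqP => /rowP/(_ ord0).
  by rewrite !mxE !ffunE /= !addn0 => /eqP; rewrite eqr_nat; lia.
apply (@hyperplane_not_aff_indep _ _ _ (w2 p1 p2) (p1 * al + p2 * be)%:R).
  by exists ord0; rewrite /w2 /= -lt0n.
by move=> x /(newton_faceP gpoly_radial_deg (gpoly_coef_neq0 k1_in))[].
Qed.

End Radial.

Lemma meval_gpoly (z : 'I_2 -> R[i]) :
  meval g z = lmono (z ord0) (z (lift ord0 ord0)) a (al - a)%N b (be - b)%N
            - lmono (z ord0) (z (lift ord0 ord0)) a' (al - a')%N b' (be - b')%N
            + lmono (z ord0) (z (lift ord0 ord0)) c (ga - c)%N d (de - d)%N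
            + lmono (z ord0) (z (lift ord0 ord0)) c' (ga - c')%N d' (de - d')%N.
Proof.
rewrite /meval /gpoly !big_cons big_nil /= !big_ord_recl !big_ord0 /= !ffunE /=.
by rewrite !mul1r mulN1r !mulr1 addr0 !addrA.
Qed.

Lemma gpoly_torus_neq0 z : in_torus z -> meval g z != 0.
Proof.
move=> z_torus; rewrite meval_gpoly.
move: (z_torus ord0) (z_torus (lift ord0 ord0)).
move: (z ord0) (z (lift ord0 ord0)) => z1 z2 z1_neq0 z2_neq0.
case: H3 => Hc3 Hd3.
pose T1 := lmono z1 z2 a (al - a)%N b (be - b)%N.
pose W := lmono z1 z2 Da 0 Db 0.
pose r := lmono z1 z2 (c%:Z - a%:Z) (c%:Z - a%:Z) (d%:Z - b%:Z) (d%:Z - b%:Z).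
have T1_neq0 : T1 != 0 by apply: lmono_neq0.
have W_neq0 : W != 0 by apply: lmono_neq0.
have WJ_neq0 : conjc W != 0 by rewrite conjc_eq0.
have r_gt0 : 0 < r by apply: lmono_diag_gt0.
have T2E : lmono z1 z2 a' (al - a')%N b' (be - b')%N = T1 * (conjc W / W).
  by rewrite -lmono_conj_div // -lmonoD //; congr lmono; lia.
have T4E : lmono z1 z2 c' (ga - c')%N d' (de - d')%N =
           lmono z1 z2 c (ga - c)%N d (de - d)%N * (conjc W / W).
  by rewrite -lmono_conj_div // -lmonoD //; congr lmono; lia.
rewrite T2E T4E; case: H4 => -[h4a h4b].
- have -> : lmono z1 z2 c (ga - c)%N d (de - d)%N = T1 * r * conjc W.
    by rewrite lmono_conj -!lmonoD //; congr lmono; lia.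
  have -> : T1 - T1 * (conjc W / W) + T1 * r * conjc W + T1 * r * conjc W * (conjc W / W)
      = T1 / W * (W - conjc W + r * conjc W * (W + conjc W)) by field.
  by apply: mulf_neq0; [apply: mulf_neq0; rewrite ?invr_eq0 | apply: subJ_add_pmulJ_neq0].
- have -> : lmono z1 z2 c (ga - c)%N d (de - d)%N = T1 * r / conjc W.
    by rewrite -lmono_conj_inv // -!lmonoD //; congr lmono; lia.
  have -> : T1 - T1 * (conjc W / W) + T1 * r / conjc W + T1 * r / conjc W * (conjc W / W)
      = T1 / (W * conjc W) * (conjc W * (W - conjc W) + r * (W + conjc W)).
    by field; apply/andP.
  apply: mulf_neq0; last exact: mulJ_subJ_add_pmul_neq0.
  by rewrite mulf_neq0 // invr_eq0 mulf_neq0.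
Qed.

End GPoly.

Theorem mainTheorem1 (R : realType)
    (al be ga de a a' b b' c c' d d' p1 p2 : nat) (q1 q2 k : int)
    (Hag : (al < ga)%N) (Hdb : (de < be)%N)
    (Ha : (a <= al)%N) (Ha' : (a' <= al)%N) (Hb : (b <= be)%N) (Hb' : (b' <= be)%N)
    (Hc : (c <= ga)%N) (Hc' : (c' <= ga)%N) (Hd : (d <= de)%N) (Hd' : (d' <= de)%N)
    (Hp1 : (0 < p1)%N) (Hp2 : (0 < p2)%N)
    (Hq1 : 0 <= q1) (Hq2 : 0 <= q2) (HQ : (q1 != 0) || (q2 != 0))
    (H1 : p1%:Z * (ga%:Z - al%:Z) + p2%:Z * (de%:Z - be%:Z) = 0)
    (Hk : k != 0)
    (H2a : a%:Z - a'%:Z = q2 * k) (H2b : b%:Z - b'%:Z = - (q1 * k))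
    (H3 : (a%:Z - a'%:Z, b%:Z - b'%:Z) = (c%:Z - c'%:Z, d%:Z - d'%:Z))
    (H4 : let v := (2 * (a%:Z - c%:Z) - al%:Z + ga%:Z, 2 * (b%:Z - d%:Z) - be%:Z + de%:Z) in
          v = (a%:Z - a'%:Z, b%:Z - b'%:Z) \/ v = (- (a%:Z - a'%:Z), - (b%:Z - b'%:Z)))
    (H5 : q1 * (2 * a%:Z - al%:Z) + q2 * (2 * b%:Z - be%:Z) != 0) :
  let g := gpoly R al be ga de a a' b b' c c' d d' in
  let P := w2 p1 p2 in
  let Q := w2 q1 q2 in
  let dr := (p1 * al + p2 * be)%N in
  let dp := q1 * (2 * a%:Z - al%:Z) + q2 * (2 * b%:Z - be%:Z) in
  [/\ mixed_wh g /\
      radially_wh g P dr /\ dr = (p1 * ga + p2 * de)%N /\ (0 < dr)%N,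
      polar_wh g Q dp /\ dp != 0,
      aff_dim (newton_face g P) 1 /\
        (forall nu mu, mcoef g nu mu = mcoef (face_fun g (newton_face g P)) nu mu),
      (forall z, in_torus z -> meval g z != 0) &
      newton_nondeg_over g (newton_face g P) /\
      ~ strongly_newton_nondeg_over g (newton_face g P)].
Proof.
move=> g P Q dr dp.
have Hdeg : (p1 * ga + p2 * de = p1 * al + p2 * be)%N by lia.
have Horth : q1 * (a%:Z - a'%:Z) + q2 * (b%:Z - b'%:Z) = 0 by rewrite H2a H2b; ring.
have Hshift := orth_shift_neq0 Hk HQ H2a H2b.
have g_torus : forall z, in_torus z -> meval g z != 0.
  exact (gpoly_torus_neq0 Ha Ha' Hb Hb' Hc Hc' Hd Hd' H3 H4).
have face_g : face_fun g (newton_face g P) = g.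
  exact (gpoly_newton_face_fun Ha Ha' Hb Hb' Hc Hc' Hd Hd' H3 p1 p2 Hdeg Hag Hshift).
have g_radial : radially_wh g P dr.
  by apply (gpoly_radially_wh Ha Ha' Hb Hb' Hc Hc' Hd Hd' p1 p2 Hdeg Hp2); lia.
split.
- split; first by exists P, dr, Q, dp; split; last exact: gpoly_polar_wh.
  by split=> //; split; [lia | case: g_radial].
- by split; first exact: gpoly_polar_wh.
- split; last by rewrite face_g.
  exact (gpoly_newton_face_dim Ha Ha' Hb Hb' Hc Hc' Hd Hd' H3 p1 p2 Hdeg Hag Hshift Hp1).
- exact: g_torus.
- split; [apply: torus_neq0_newton_nondeg | apply: torus_neq0_not_strongly_newton_nondeg];
    by rewrite face_g.
Qed.
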